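(* Let $q\ge 1$ and $n\ge 0$. The map $\phi$ defined below restricts to a bijection from $\mathcal{B}_n(1^{q+1})$ onto $\mathcal{W}^q_n$. Here, for $w\in\mathcal{B}_n(1^{q+1})$, $\phi(w)$ is defined recursively by $$\phi(w)=\begin{cases}1^k & \text{if } w=1^k,\ k\in[0,q],\\ \psi(\phi(v)) & \text{if } w=1^q0v,\\ \phi(v)\,01^k & \text{if } w=1^k0v,\ k\in[0,q-1],\end{cases}$$ and $\psi$ is the map from $\mathcal{B}_m$ to $\mathcal{B}_{m+q+1}$ given by $\psi(v01^k)=v001^{k+q}$ for any binary word $v$ and $k\ge 0$, and $\psi(1^m)=1^{m+q+1}$.
   Context: $\mathcal{B}_n$ is the set of binary words (over $\{0,1\}$) of length $n$; $\mathcal{B}_n(1^{q+1})$ is the set of words in $\mathcal{B}_n$ having no factor (block of consecutive letters) equal to $1^{q+1}$. For $q\ge1$, a binary word is $q$-decreasing if for every maximal run of $0$s, of length $a>0$, together with the (possibly empty) maximal run of $1$s immediately following it, of length $b\ge 0$, one has $q\cdot a>b$. $\mathcal{W}^q_n$ denotes the set of $q$-decreasing words of length $n$. Exponents denote repetition, e.g. $1^k$ is $k$ consecutive $1$s. *)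

(* Binary words are seq bool, with true = 1 and false = 0. *)
From mathcomp Require Import all_boot.
Set Implicit Arguments. Unset Strict Implicit. Unset Printing Implicit Defensive.

Definition avoids_ones (q : nat) (w : seq bool) : bool :=
  ~~ infix (nseq q.+1 true) w.

(* q-decreasing: for every maximal run of 0s of length a > 0 together with the
   (possibly empty) maximal run of 1s of length b immediately following it,
   q * a > b.  A decomposition w = u ++ 0^a ++ 1^b ++ x describes such a pair of
   maximal runs iff u is empty or ends with 1, and x is empty or (b > 0 and x
   starts with 0). *)
Definition q_decreasing (q : nat) (w : seq bool) : Prop :=
  forall (u x : seq bool) (a b : nat),
    w = u ++ nseq a false ++ nseq b true ++ x ->
    0 < a ->
    (u = [::] \/ last false u = true) ->
    (x = [::] \/ (0 < b /\ head true x = false)) ->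
    b < q * a.

(* psi : B_m -> B_(m+q+1), psi(v 0 1^k) = v 0 0 1^(k+q), psi(1^m) = 1^(m+q+1). *)
Definition psi (q : nat) (u : seq bool) : seq bool :=
  let k := find negb (rev u) in
  if k == size u then nseq (size u + q + 1) true
  else take (size u - k - 1) u ++ [:: false; false] ++ nseq (k + q) true.

(* phi, by recursion on the length (fuel = size w suffices since the recursive
   call is on a strictly shorter word).  Writing w = 1^k 0 v with k the number of
   leading 1s:  phi(1^k) = 1^k,  phi(1^q 0 v) = psi(phi v),
   phi(1^k 0 v) = phi(v) 0 1^k for k < q.  (Values on words containing 1^(q+1)
   are irrelevant.) *)
Fixpoint phi_fuel (q fuel : nat) (w : seq bool) : seq bool :=
  match fuel with
  | 0 => w
  | f.+1 =>
    let k := find negb w in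
    if k == size w then w
    else let v := drop k.+1 w in
         if k == q then psi q (phi_fuel q f v)
         else phi_fuel q f v ++ false :: nseq k true
  end.

Definition phi (q : nat) (w : seq bool) : seq bool := phi_fuel q (size w) w.

From mathcomp Require Import all_boot zify.
Set Implicit Arguments. Unset Strict Implicit. Unset Printing Implicit Defensive.

(* Write w = 1^k 0 v with k <= q (or w = 1^n with n <= q).  The number k can be read
   off phi w as min(q, number of trailing 1s of phi w): psi leaves at least q trailing
   1s, whereas phi(v) 0 1^k ends with exactly k < q of them.  As psi is injective,
   induction on the length gives injectivity of phi.  Conversely, psi lengthens the
   last 0-run by one and the 1-run after it by q, so it preserves and reflects the
   condition q*a > b on that pair of runs; hence every q-decreasing word is 1^n with
   n <= q, or psi(x), or x 0 1^k with k < q, for a shorter q-decreasing x.  By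
   induction this shows both that phi lands in W^q_n and that it is onto. *)

Lemma size_ind (T : Type) (P : seq T -> Prop) :
  (forall s, (forall s', size s' < size s -> P s') -> P s) -> forall s, P s.
Proof.
move=> IH s; elim: (size s).+1 {-2}s (ltnSn (size s)) => // n IHn {}s hs.
by apply: IH => s' hs'; apply: IHn; apply: leq_trans hs' _.
Qed.

Lemma nseqS_cat (T : Type) n (x : T) s : nseq n.+1 x ++ s = nseq n x ++ x :: s.
Proof. by elim: n => //= n ->. Qed.

Lemma nseqSr (T : Type) n (x : T) : nseq n.+1 x = rcons (nseq n x) x.
Proof. by elim: n => //= n <-. Qed.

Lemma head_rev (T : Type) (x : T) s : head x (rev s) = last x s.
Proof. by case/lastP: s => // s y; rewrite rev_rcons last_rcons. Qed.

Lemma cat_injl (T : eqType) (t : seq T) : injective (cat^~ t).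
Proof.
move=> s1 s2 E; have /addIn hs : size s1 + size t = size s2 + size t.
  by rewrite -!size_cat E.
by move/eqP: E; rewrite eqseq_cat // => /andP [/eqP].
Qed.

Lemma nseq_cat_inj (c : bool) n n' s s' :
  head (~~ c) s != c -> head (~~ c) s' != c ->
  nseq n c ++ s = nseq n' c ++ s' -> n = n' /\ s = s'.
Proof.
elim: n n' => [|n IH] [|n'] //=.
- by move=> h _ E; rewrite E /= eqxx in h.
- by move=> _ h E; rewrite -E /= eqxx in h.
- by move=> h h' [] /(IH n' h h') [-> ->].
Qed.

Lemma prefix_nseq_cat (T : eqType) (x y : T) n s t :
  y != x -> prefix (nseq n x) (s ++ y :: t) = prefix (nseq n x) s.
Proof.
move=> yx; elim: s n => [|z s IH] [|n] //=; first by rewrite eq_sym (negbTE yx).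
by rewrite IH.
Qed.

Lemma infix_nseq_cat (T : eqType) (x y : T) m s t : y != x ->
  infix (nseq m.+1 x) (s ++ y :: t) = infix (nseq m.+1 x) s || infix (nseq m.+1 x) t.
Proof.
move=> yx; elim: s => [|z s IH]; first by rewrite /= eq_sym (negbTE yx).
by rewrite cat_cons !infix_consl -cat_cons prefix_nseq_cat // IH orbA.
Qed.

Lemma infix_nseq (T : eqType) (x : T) m k : infix (nseq m x) (nseq k x) = (m <= k).
Proof.
case: leqP => hm; first by rewrite -(subnKC hm) nseqD prefix_infix.
apply/negP => /infixP [s [s' /(congr1 size)]]; rewrite !size_cat !size_nseq; lia.
Qed.

Definition leading_ones (w : seq bool) := find negb w.
Definition trailing_ones (w : seq bool) := find negb (rev w).

Variant first_zero_spec (w : seq bool) : nat -> Prop :=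
  | FirstZeroNone of w = nseq (size w) true : first_zero_spec w (size w)
  | FirstZeroAt k v of w = nseq k true ++ false :: v : first_zero_spec w k.

Lemma first_zeroP w : first_zero_spec w (leading_ones w).
Proof.
rewrite /leading_ones; elim: w => [|[] w IH] /=; first exact: FirstZeroNone.
- case: IH => [E|k v E]; first by apply: FirstZeroNone; rewrite /= -E.
  by apply: (@FirstZeroAt _ k.+1 v); rewrite E.
- exact: (@FirstZeroAt _ 0 w).
Qed.

Lemma leading_ones_nseq n : leading_ones (nseq n true) = n.
Proof. by rewrite /leading_ones find_nseq mul1n. Qed.

Lemma leading_ones_cons k v : leading_ones (nseq k true ++ false :: v) = k.
Proof. by elim: k => //= k ->. Qed.

Lemma trailing_ones_nseq n : trailing_ones (nseq n true) = n.
Proof. by rewrite /trailing_ones rev_nseq -/(leading_ones _) leading_ones_nseq. Qed.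

Lemma trailing_ones_snoc s k : trailing_ones (s ++ false :: nseq k true) = k.
Proof.
rewrite /trailing_ones rev_cat rev_cons rev_nseq -cats1 -catA /=.
exact: leading_ones_cons.
Qed.

Lemma split_last_run (c : bool) w :
  exists p n, w = p ++ nseq n c /\ last (~~ c) p = ~~ c.
Proof.
elim/last_ind: w => [|w d [p [n [-> lp]]]]; first by exists [::], 0.
case: (eqVneq d c) => [->|dc].
- by exists p, n.+1; rewrite -cats1 -catA -nseqS_cat cats0.
- exists (rcons (p ++ nseq n c) d), 0; rewrite cats0 last_rcons.
  by split => //; case: c d dc {lp} => [] [].
Qed.

Variant last_block_spec (w : seq bool) : Prop :=
  | LastBlockNone n of w = nseq n true
  | LastBlock p a b of last true p = true & w = p ++ nseq a.+1 false ++ nseq b true.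

Lemma last_blockP w : last_block_spec w.
Proof.
have [p [b [-> lp]]] := split_last_run true w.
have [p0 [[|a] [Ep lp0]]] := split_last_run false p; last first.
  by apply: (@LastBlock _ p0 a b); rewrite // Ep -catA.
apply: (@LastBlockNone _ b); rewrite Ep cats0 in lp *.
by case: p0 lp lp0 {Ep} => [|c p0] //= ->.
Qed.

Lemma last_block_inj p a b p' a' b' : last true p = true -> last true p' = true ->
  p ++ nseq a.+1 false ++ nseq b true = p' ++ nseq a'.+1 false ++ nseq b' true ->
  [/\ p = p', a = a' & b = b'].
Proof.
move=> lp lp' /(congr1 rev); rewrite !rev_cat !rev_nseq -!catA => E.
have [eb] : b = b' /\ nseq a.+1 false ++ rev p = nseq a'.+1 false ++ rev p'.
  exact: nseq_cat_inj E.
case/nseq_cat_inj; try by rewrite /= head_rev ?lp ?lp'.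
by move=> [ea] /(congr1 rev); rewrite !revK.
Qed.

Lemma avoids_nseq q m : avoids_ones q (nseq m true) = (m <= q).
Proof. by rewrite /avoids_ones infix_nseq -ltnNge. Qed.

Lemma avoids_cons q k v :
  avoids_ones q (nseq k true ++ false :: v) = (k <= q) && avoids_ones q v.
Proof. by rewrite /avoids_ones infix_nseq_cat // infix_nseq negb_or -ltnNge. Qed.

Lemma phi_fuelE q f1 f2 w : size w <= f1 -> size w <= f2 ->
  phi_fuel q f1 w = phi_fuel q f2 w.
Proof.
elim: f1 f2 w => [|f1 IH] [|f2] [|c w] //= h1 h2.
case: ifP => // _; rewrite (IH f2) // size_drop /=; lia.
Qed.

Lemma phi_nseq q n : phi q (nseq n true) = nseq n true.
Proof.
rewrite /phi size_nseq; case: n => //= n.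
by rewrite -/(leading_ones _) leading_ones_nseq size_nseq eqxx.
Qed.

Lemma phi_cons q k v : phi q (nseq k true ++ false :: v) =
  if k == q then psi q (phi q v) else phi q v ++ false :: nseq k true.
Proof.
have sw : size (nseq k true ++ false :: v) = (k + size v).+1.
  by rewrite size_cat size_nseq addnS.
rewrite /phi sw /= -/(leading_ones _) leading_ones_cons sw ifN; last by lia.
have -> : drop k.+1 (nseq k true ++ false :: v) = v.
  by elim: k {sw} => [|k IH]; [exact: drop0 | exact: IH].
by rewrite (@phi_fuelE q (k + size v) (size v)) ?leq_addl.
Qed.

Lemma psi_nseq q m : psi q (nseq m true) = nseq (m + q + 1) true.
Proof. by rewrite /psi -/(trailing_ones _) trailing_ones_nseq size_nseq eqxx. Qed.

Lemma psi_block q p a b : psi q (p ++ nseq a.+1 false ++ nseq b true) =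
  p ++ nseq a.+2 false ++ nseq (b + q) true.
Proof.
rewrite nseqS_cat catA /psi -/(trailing_ones _) trailing_ones_snoc.
set s := p ++ nseq a false.
have sw : size (s ++ false :: nseq b true) = size s + b.+1.
  by rewrite size_cat /= size_nseq.
rewrite sw ifN; last by lia.
have -> : size s + b.+1 - b - 1 = size s by lia.
by rewrite take_size_cat // -catA !nseqS_cat.
Qed.

Lemma size_psi q x : size (psi q x) = size x + q + 1.
Proof.
case: (last_blockP x) => [n ->|p a b _ ->]; first by rewrite psi_nseq !size_nseq.
rewrite psi_block !size_cat !size_nseq; lia.
Qed.

Lemma trailing_ones_psi q x : q <= trailing_ones (psi q x).
Proof.
case: (last_blockP x) => [n ->|p a b _ ->].
  by rewrite psi_nseq trailing_ones_nseq addn1 ltnW // ltnS leq_addl.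
by rewrite psi_block nseqS_cat catA trailing_ones_snoc leq_addl.
Qed.

Lemma psi_inj q x1 x2 : size x1 = size x2 -> psi q x1 = psi q x2 -> x1 = x2.
Proof.
case: (last_blockP x1) => [n1 ->|p1 a1 b1 l1 ->];
case: (last_blockP x2) => [n2 ->|p2 a2 b2 l2 ->] hs.
- by move: hs; rewrite !size_nseq => ->.
- by move/(congr1 (has negb)); rewrite psi_nseq psi_block has_nseq !has_cat /= andbF orbT.
- by move/(congr1 (has negb)); rewrite psi_nseq psi_block has_nseq !has_cat /= andbF orbT.
- rewrite !psi_block => /last_block_inj[] // -> [->] /eqP.
  by rewrite eqn_add2r => /eqP ->.
Qed.

Lemma size_ones_cons k v : size v < size (nseq k true ++ false :: v).
Proof. by rewrite size_cat /= addnS ltnS leq_addl. Qed.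

Lemma size_phi q w : size (phi q w) = size w.
Proof.
elim/size_ind: w => w IH; case: (first_zeroP w) => [E|k v E].
  by rewrite E phi_nseq.
have ltv : size v < size w by rewrite E size_ones_cons.
rewrite E phi_cons size_cat size_nseq /=.
case: eqP => [->|_]; rewrite ?size_psi ?size_cat (IH v ltv) /= ?size_nseq; lia.
Qed.

(* Equivalent to q_decreasing (q_decreasingE) but without requiring the 1-run to be
   maximal, which makes it closed under taking prefixes. *)
Definition qdec q (w : seq bool) : Prop := forall u x a b,
  w = u ++ nseq a false ++ nseq b true ++ x -> 0 < a -> last true u = true ->
  b < q * a.

Lemma q_decreasingE q w : 0 < q -> q_decreasing q w <-> qdec q w.
Proof.
move=> q0; split => [H u x a b E a0 lu | H u x a b E a0 hu _]; last first.
  by apply: H E a0 _; case: hu => [->|]; last case: u.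
have hu : u = [::] \/ last false u = true.
  by case: u lu {E} => [|c u] /=; [left | right].
case: (first_zeroP x) E => [Ex|t v ->] E.
  apply: leq_ltn_trans (H u [::] a (b + size x) _ a0 hu (or_introl erefl)).
    exact: leq_addr.
  by rewrite E nseqD -catA cats0 -Ex.
case: (posnP (b + t)) => [bt0|btp].
  have -> : b = 0 by lia.
  by rewrite muln_gt0 q0.
apply: leq_ltn_trans (H u (false :: v) a (b + t) _ a0 hu _); first exact: leq_addr.
- by rewrite E nseqD -!catA.
- by right.
Qed.

Lemma qdec_catl q w y : qdec q (w ++ y) -> qdec q w.
Proof. by move=> H u x a b E; apply: (H u (x ++ y)); rewrite E -!catA. Qed.

Lemma qdec_nseq q n : qdec q (nseq n true).
Proof.
move=> u x [|a] b E // _ _.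
have : false \in nseq n true by rewrite E !mem_cat mem_head orbT.
by rewrite mem_nseq andbF.
Qed.

Lemma qdec_rcons_false q w : 0 < q -> qdec q w -> qdec q (rcons w false).
Proof.
move=> q0 H u x a b E a0 lu.
case/lastP: x E => [|x c] E.
- case: b E => [|b] E; first by rewrite muln_gt0 q0.
  move/(congr1 (last true)): E.
  by rewrite cats0 (nseqSr b) -!rcons_cat !last_rcons.
- rewrite -!rcons_cat in E; case/rcons_inj: E => Ew _.
  exact: (H u x a b Ew).
Qed.

Lemma qdec_rcons_true q p a b : last true p = true ->
  qdec q (p ++ nseq a.+1 false ++ nseq b true) -> b.+1 < q * a.+1 ->
  qdec q (rcons (p ++ nseq a.+1 false ++ nseq b true) true).
Proof.
move=> lp H hb u x [//|a'] b' E _ lu.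
case/lastP: x E => [|x c] E; last first.
  by move: E; rewrite -!rcons_cat => /rcons_inj[Ew _]; apply: (H u x a'.+1 b').
case: b' E => [|b'] E; first by rewrite muln_gt0; case: q hb {H}.
have Ew : p ++ nseq a.+1 false ++ nseq b true = u ++ nseq a'.+1 false ++ nseq b' true.
  by apply: (@rcons_injl _ true); rewrite E cats0 (nseqSr b') -!rcons_cat.
by have [_ <- <-] := last_block_inj lp lu Ew.
Qed.

Lemma qdec_cat_zeros q w a : 0 < q -> qdec q w -> qdec q (w ++ nseq a false).
Proof.
move=> q0 H; elim: a => [|a IH]; first by rewrite cats0.
by rewrite (nseqSr a) -rcons_cat; apply: qdec_rcons_false.
Qed.

Lemma qdec_block q p a b : 0 < q -> last true p = true ->
  qdec q (p ++ nseq a.+1 false ++ nseq b true) <-> qdec q p /\ b < q * a.+1.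
Proof.
move=> q0 lp; split => [H | [H hb]].
  by split; [exact: qdec_catl H | apply: (H p [::]); rewrite ?cats0].
elim: b hb => [|b IH] hb; first by rewrite cats0; apply: qdec_cat_zeros.
rewrite (nseqSr b) -!rcons_cat.
by apply: qdec_rcons_true => //; apply: IH; apply: ltnW.
Qed.

Lemma qdec_psi q x : 0 < q -> qdec q x -> qdec q (psi q x).
Proof.
move=> q0; case: (last_blockP x) => [n ->|p a b lp ->] H.
  by rewrite psi_nseq; apply: qdec_nseq.
rewrite psi_block; have [qp hb] := (qdec_block _ _ q0 lp).1 H.
by apply/qdec_block => //; split => //; rewrite mulnS addnC ltn_add2l.
Qed.

Lemma qdec_snoc q w k : 0 < q -> qdec q w -> k < q ->
  qdec q (w ++ false :: nseq k true).
Proof.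
move=> q0 H hk; have [p [a [Ew lp]]] := split_last_run false w.
rewrite Ew -catA -nseqS_cat; apply/qdec_block => //.
split; first by apply: (@qdec_catl _ _ (nseq a false)); rewrite -Ew.
by rewrite mulnS; apply: leq_trans hk (leq_addr _ _).
Qed.

Lemma qdecP q w : 0 < q -> qdec q w ->
  [\/ size w <= q /\ w = nseq (size w) true,
      exists2 x, qdec q x & w = psi q x
    | exists k x, [/\ k < q, qdec q x & w = x ++ false :: nseq k true]].
Proof.
move=> q0; case: (last_blockP w) => [n ->|p a b lp ->] H.
  rewrite size_nseq; case: (leqP n q) => hn; first by apply: Or31.
  apply: Or32; exists (nseq (n - q.+1) true); first exact: qdec_nseq.
  by rewrite psi_nseq; congr nseq; lia.
have [qp hb] := (qdec_block _ _ q0 lp).1 H.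
case: (ltnP b q) => hbq.
  rewrite nseqS_cat catA in H *.
  by apply: Or33; exists b, (p ++ nseq a false); split => //; apply: qdec_catl H.
case: a hb H => [|a] hb H; first by move: hb; rewrite muln1 ltnNge hbq.
apply: Or32; exists (p ++ nseq a.+1 false ++ nseq (b - q) true).
  by apply/qdec_block => //; split => //; move: hb; rewrite mulnS; lia.
by rewrite psi_block subnK.
Qed.

Variant phi_spec q w : seq bool -> Prop :=
  | PhiOnes of size w <= q & w = nseq (size w) true : phi_spec q w w
  | PhiPsi v of avoids_ones q v & w = nseq q true ++ false :: v :
      phi_spec q w (psi q (phi q v))
  | PhiSnoc k v of k < q & avoids_ones q v & w = nseq k true ++ false :: v :
      phi_spec q w (phi q v ++ false :: nseq k true).

Lemma phiP q w : avoids_ones q w -> phi_spec q w (phi q w).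
Proof.
case: (first_zeroP w) => [E|k v E].
  have -> : phi q w = w by rewrite E phi_nseq.
  by move=> av; apply: PhiOnes => //; rewrite -avoids_nseq -E.
rewrite {1}E avoids_cons => /andP[hk av]; rewrite [X in phi q X]E phi_cons.
case: eqP => [ekq|/eqP nkq]; first by apply: PhiPsi; rewrite // E ekq.
by apply: PhiSnoc => //; rewrite ltn_neqAle nkq.
Qed.

Lemma qdec_phi q w : 0 < q -> avoids_ones q w -> qdec q (phi q w).
Proof.
move=> q0; elim/size_ind: w => w IH /phiP[_ E | v av E | k v hk av E].
- by rewrite E; apply: qdec_nseq.
- by apply/qdec_psi/IH/av; rewrite // E size_ones_cons.
- by apply/qdec_snoc/hk/IH/av; rewrite // E size_ones_cons.
Qed.

Lemma leading_ones_phi q w :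
  avoids_ones q w -> leading_ones w = minn q (trailing_ones (phi q w)).
Proof.
case/phiP => [hw E | v _ E | k v hk _ E]; rewrite E.
- by rewrite leading_ones_nseq trailing_ones_nseq; apply/esym/minn_idPr.
- by rewrite leading_ones_cons; apply/esym/minn_idPl/trailing_ones_psi.
- by rewrite leading_ones_cons trailing_ones_snoc; apply/esym/minn_idPr/ltnW.
Qed.

Lemma phi_inj q w1 w2 : avoids_ones q w1 -> avoids_ones q w2 ->
  size w1 = size w2 -> phi q w1 = phi q w2 -> w1 = w2.
Proof.
elim/size_ind: w1 w2 => w1 IH w2 av1 av2 hs E.
have := leading_ones_phi av1; rewrite E -(leading_ones_phi av2).
case: (first_zeroP w1) => [E1|k v1 E1]; case: (first_zeroP w2) => [E2|k' v2 E2].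
- by rewrite E1 E2 hs.
- by move: hs; rewrite E2 size_cat size_nseq /= => hs ek; lia.
- by move: hs; rewrite E1 size_cat size_nseq /= => hs ek; lia.
move=> ek; subst k'.
have hv : size v1 = size v2 by move: hs; rewrite E1 E2 !size_cat /=; lia.
move: E av1 av2; rewrite E1 E2 !phi_cons !avoids_cons => E /andP[_ av1] /andP[_ av2].
have ev : phi q v1 = phi q v2.
  case: eqP E => _; first by apply: psi_inj; rewrite !size_phi.
  exact: cat_injl.
have lt1 : size v1 < size w1 by rewrite E1 size_ones_cons.
by rewrite (IH v1 lt1 v2 av1 av2 hv ev).
Qed.

Lemma phi_surj q w' : 0 < q -> qdec q w' ->
  exists w, [/\ size w = size w', avoids_ones q w & phi q w = w'].
Proof.
move=> q0; elim/size_ind: w' => w' IH.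
case/(qdecP q0) => [[hw E] | [x qx Ew] | [k [x [hk qx Ew]]]].
- by exists w'; split; rewrite // E ?avoids_nseq ?phi_nseq.
- have [|v [sv av ev]] := IH x _ qx; first by rewrite Ew size_psi; lia.
  exists (nseq q true ++ false :: v).
  rewrite Ew phi_cons eqxx ev avoids_cons leqnn size_psi size_cat size_nseq /= sv.
  by split => //; lia.
- have [|v [sv av ev]] := IH x _ qx; first by rewrite Ew size_cat /=; lia.
  exists (nseq k true ++ false :: v).
  rewrite Ew phi_cons (ltn_eqF hk) ev avoids_cons (ltnW hk) av.
  by split => //; rewrite !size_cat /= size_nseq sv; lia.
Qed.

Theorem theorem1 (q n : nat) : 1 <= q ->
  (* phi maps B_n(1^(q+1)) into W^q_n *)
  (forall w : seq bool, size w = n -> avoids_ones q w ->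
     size (phi q w) = n /\ q_decreasing q (phi q w)) /\
  (* injective on B_n(1^(q+1)) *)
  (forall w1 w2 : seq bool, size w1 = n -> avoids_ones q w1 ->
     size w2 = n -> avoids_ones q w2 -> phi q w1 = phi q w2 -> w1 = w2) /\
  (* surjective onto W^q_n *)
  (forall w' : seq bool, size w' = n -> q_decreasing q w' ->
     exists w : seq bool, [/\ size w = n, avoids_ones q w & phi q w = w']).
Proof.
move=> q0; split; [|split].
- move=> w sw av; split; first by rewrite size_phi.
  exact/(q_decreasingE _ q0)/qdec_phi.
- by move=> w1 w2 s1 av1 s2 av2; apply: phi_inj; rewrite ?s1.
- by move=> w' <- /(q_decreasingE _ q0) /(phi_surj q0).
Qed.
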